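(* Let $n\ge3$. Suppose that for every set $W\subseteq V$ with $|W|=n$ that can be generated from some connected pair, there exist $X\supseteq W$ with $D[X]$ a directed sub-block and a node $i\in W$ reachable from all other nodes in both $D[W]$ and $D[X]$. Then the same conclusion holds for every set $W\subseteq V$ with $|W|=n+1$ that can be generated from some connected pair.
   Context: $D=(V,A)$ is a directed graph. $\mathrm{IN}(X)$ is the set of nodes from which some member of $X$ is reachable by a directed path. For disjoint nonempty $X,Y,Z$, $f_E(X,Y,Z)=1$ iff $\mathrm{IN}(X)\cap\mathrm{IN}(Y)=\emptyset$ computed in $D-Z$; node $j$ is dynamically partitioning relative to $k$ and $Y$ iff $f_E(\{k\},Y,\{j\})=1$. A connected pair is a set $\{i,j\}$ joined by an arc in some direction. A set $W_n$ of size $n$ can be generated from $W_m$ of size $m$, $2\le m<n$, iff there are sets $W_m\subset\dots\subset W_n$ with $W_{l+1}=W_l\cup\{k\}$, $k\in V\setminus W_l$, such that there is an arc from $k$ to some $j\in W_l$ that is not dynamically partitioning relative to $k$ and $W_l\setminus\{j\}$. $D[W]$ is the subgraph induced on $W$; reachability in $D[W]$ is via directed paths inside $D[W]$. A graph is biconnected if it has at least three vertices, is connected and remains connected after deleting any one vertex. $D[X]$ is a directed sub-block if some node of $X$ is reachable within $D[X]$ from all other nodes and the underlying undirected graph of $D[X]$ is biconnected. *)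

(* Finite digraph D = (V, A): V = T : finType, A given by a : rel T. *)
From mathcomp Require Import all_boot.
Set Implicit Arguments. Unset Strict Implicit. Unset Printing Implicit Defensive.

Section Defs.
Variable T : finType.
Variable a : rel T.

(* the relation a restricted to the node set S (induced subgraph D[S]) *)
Definition restr (r : rel T) (S : {set T}) : rel T :=
  [rel x y | [&& x \in S, y \in S & r x y]].

(* IN(X) computed in the subgraph induced on S: nodes of S from which some
   member of X is reachable by a directed path (possibly trivial) inside S *)
Definition IN_in (S X : {set T}) : {set T} :=
  [set x in S | [exists y in X, connect (restr a S) x y]].

(* f_E(X,Y,Z) = 1 iff IN(X) and IN(Y) are disjoint, computed in D - Z *)
Definition fE (X Y Z : {set T}) : bool :=
  [disjoint IN_in (~: Z) X & IN_in (~: Z) Y].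

Definition dyn_part (j k : T) (Y : {set T}) : bool := fE [set k] Y [set j].

Definition gen_step (W W' : {set T}) : Prop :=
  exists k, k \notin W /\ W' = k |: W /\
    exists j, j \in W /\ a k j /\ ~~ dyn_part j k (W :\ j).

Inductive gen_chain (W0 : {set T}) : {set T} -> Prop :=
| gen_chain_refl : gen_chain W0 W0
| gen_chain_step W1 W2 : gen_chain W0 W1 -> gen_step W1 W2 -> gen_chain W0 W2.

Definition generated_from (Wm Wn : {set T}) : Prop :=
  2 <= #|Wm| < #|Wn| /\ gen_chain Wm Wn.

Definition connected_pair (P : {set T}) : Prop :=
  exists i j, i != j /\ (a i j || a j i) /\ P = [set i; j].

Definition gen_from_pair (W : {set T}) : Prop :=
  exists P, connected_pair P /\ generated_from P W.

Definition sink_in (X : {set T}) (i : T) : Prop :=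
  i \in X /\ forall x, x \in X -> connect (restr a X) x i.

Definition uadj : rel T := [rel x y | (x != y) && (a x y || a y x)].

Definition uconnected (S : {set T}) : Prop :=
  forall x y, x \in S -> y \in S -> connect (restr uadj S) x y.

Definition biconnected (X : {set T}) : Prop :=
  3 <= #|X| /\ uconnected X /\ forall v, v \in X -> uconnected (X :\ v).

Definition directed_subblock (X : {set T}) : Prop :=
  (exists i, sink_in X i) /\ biconnected X.

Definition has_block (W : {set T}) : Prop :=
  exists X : {set T}, W \subset X /\ directed_subblock X /\
    exists i, i \in W /\ sink_in W i /\ sink_in X i.

End Defs.

From mathcomp Require Import all_boot.
Set Implicit Arguments. Unset Strict Implicit. Unset Printing Implicit Defensive.

(* A set W of size n+1 generated from a pair arises from a generated set W1 of size n
   by adding a node k with an arc k -> j, j in W1, where j is not dynamically partitioning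
   relative to k and W1 \ j.  By hypothesis W1 lies in a directed sub-block X with a common sink
   i, and i is also a sink of W through the arc k -> j.  Non-partitioning gives, in D - j, a
   node z reaching both k and some w in W1 \ j; restarting the two paths from a common node
   makes them disjoint.  The arc j-k followed by these paths is a simple path from j to w avoiding j
   elsewhere, and adding such a path with both ends in X to the biconnected X keeps it
   biconnected, since every new node can still reach one of the two ends after deleting any
   vertex.  Every new node reaches k or w by a directed path, hence i. *)

Section RestrictedPaths.
Variable T : finType.
Implicit Types (r : rel T) (S A B : {set T}) (x y : T) (p : seq T).

Lemma restrS r A B : A \subset B -> subrel (restr r A) (restr r B).
Proof. by move=> /subsetP sAB x y; rewrite /restr /= => /and3P[/sAB-> /sAB-> ->]. Qed.

Lemma connect_restrS r A B :
  A \subset B -> subrel (connect (restr r A)) (connect (restr r B)).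
Proof. by move=> sAB; apply: connect_sub => x y /(restrS sAB) /connect1. Qed.

Lemma restr_sym r S : symmetric r -> symmetric (restr r S).
Proof. by move=> sr x y; rewrite /restr /= sr andbCA. Qed.

Lemma path_restr r S x p : all (mem S) (x :: p) -> path r x p -> path (restr r S) x p.
Proof.
elim: p x => //= y p IHp x /and3P[xS yS Sp] /andP[rxy rp].
by rewrite /restr /= xS yS rxy IHp //= yS.
Qed.

Lemma path_restr_base r S x p : path (restr r S) x p -> path r x p.
Proof. by apply: sub_path => u v /and3P[]. Qed.

Lemma path_restr_sub r S x p : path (restr r S) x p -> {subset p <= S}.
Proof.
elim: p x => //= y p IHp x /andP[/and3P[_ yS _] rp] u.
by rewrite inE => /predU1P[->|/(IHp _ rp)].
Qed.

Lemma path_restr_all r S x p :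
  path (restr r S) x p -> last x p \in S -> all (mem S) (x :: p).
Proof.
case: p => [|y p] /=; first by move=> _ ->.
move=> /andP[/and3P[-> yS _] rp] _; rewrite yS.
by apply/allP=> u /(path_restr_sub rp).
Qed.

Lemma connect_path_suffix r x p u : path r x p -> u \in x :: p -> connect r u (last x p).
Proof.
move=> rp up; case/splitPl: up rp => p1 p2 <-.
by rewrite cat_path last_cat => /andP[_ rp2]; apply/connectP; exists p2.
Qed.

Lemma connect_restr_path r S x p u : path r x p -> all (mem S) (x :: p) ->
  u \in x :: p -> connect (restr r S) u (last x p).
Proof. by move=> rp Sp; apply: connect_path_suffix; apply: path_restr. Qed.

Lemma connect_restr_end r S x y : connect (restr r S) x y -> x = y \/ y \in S.
Proof.
case/connectP=> [[|z p] rp ->]; [by left | right].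
exact: (path_restr_sub rp) (mem_last _ _).
Qed.

(* Walk from u towards the end of the path whose side does not contain v. *)
Lemma path_cut r S x p u v : symmetric r -> path r x p -> uniq (x :: p) ->
  (forall z, z \in x :: p -> z != v -> z \in S) -> u \in x :: p -> u != v ->
  connect (restr r S) u x \/ connect (restr r S) u (last x p).
Proof.
move=> sr rp up Sp up0 uv; case/splitPl: up0 rp up Sp => p1 p2 Eu.
rewrite cat_path last_cat -cat_cons cat_uniq Eu => /andP[rp1 rp2] /and3P[_ dis _] Sp.
have [vp2|vNp2] := boolP (v \in p2).
  left; rewrite (sym_connect_sym (restr_sym S sr)) -Eu.
  apply: connect_restr_path rp1 _ (mem_head _ _); apply/allP=> z zp1.
  apply: Sp; first by rewrite mem_cat zp1.
  by apply: contraTneq vp2 => <-; apply/negP => /(hasPn dis); rewrite /= zp1.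
right; apply: connect_restr_path rp2 _ (mem_head _ _); apply/allP=> z.
rewrite inE => /predU1P[->|zp2].
  by apply: Sp uv; rewrite -Eu mem_cat mem_last.
by apply: Sp; [rewrite mem_cat zp2 orbT | apply: contraNneq vNp2 => <-].
Qed.

End RestrictedPaths.

Section Ear.
Variables (T : finType) (a : rel T).
Implicit Types (S X Y B : {set T}) (x y : T) (p s : seq T).

Lemma uadj_sym : symmetric (uadj a).
Proof. by move=> x y; rewrite /uadj /= eq_sym orbC. Qed.

Lemma path_uadj S x p : path (restr a S) x p -> uniq (x :: p) -> path (uadj a) x p.
Proof.
elim: p x => //= y p IHp x /andP[/and3P[_ _ axy] rp] /andP[xNp up].
rewrite IHp // andbT /uadj /= axy andbT.
by apply: contraNneq xNp => ->; rewrite mem_head.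
Qed.

Lemma uconnected_hub Y B :
  {in B &, forall b1 b2, connect (restr (uadj a) Y) b1 b2} ->
  {in Y, forall u, exists2 b, b \in B & connect (restr (uadj a) Y) u b} ->
  uconnected a Y.
Proof.
move=> cB cY x y xY yY.
have [bx bxB cx] := cY x xY; have [b' b'B cy] := cY y yY.
have sym := sym_connect_sym (restr_sym Y uadj_sym).
by apply: connect_trans cx _; apply: connect_trans (cB _ _ bxB b'B) _; rewrite sym.
Qed.

Lemma biconnected_uconnectedD1 X v : biconnected a X -> uconnected a (X :\ v).
Proof.
case=> _ [cX cXD1]; have [vX|vNX] := boolP (v \in X); first exact: cXD1.
by rewrite (setDidPl _) // disjoint_sym disjoints1.
Qed.

Lemma biconnected_add_path X j s : biconnected a X -> j \in X ->
  path (uadj a) j s -> uniq (j :: s) -> last j s \in X ->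
  biconnected a (X :|: [set x in s]).
Proof.
move=> bX jX ps us lX; set Y := X :|: [set x in s].
have sXY : X \subset Y by apply: subsetUl.
have ear_to_X v u : u \in s -> u != v ->
    exists2 t, t \in X :\ v & connect (restr (uadj a) (Y :\ v)) u t.
  move=> us' uv.
  have sY z : z \in j :: s -> z != v -> z \in Y :\ v.
    by rewrite inE => /predU1P[->|zs] zv; rewrite !inE zv ?jX ?zs ?orbT.
  have toX t : t \in X -> connect (restr (uadj a) (Y :\ v)) u t ->
      exists2 t, t \in X :\ v & connect (restr (uadj a) (Y :\ v)) u t.
    move=> tX ut; exists t => //; rewrite !inE tX andbT.
    by case: (connect_restr_end ut) => [<- // | /setD1P[]].
  have [] := path_cut uadj_sym ps us sY (@mem_behead _ (j :: s) u us') uv; exact: toX.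
split; last split.
- by case: bX => X3 _; rewrite (leq_trans X3) ?subset_leq_card.
- apply: (uconnected_hub (B := X)) => [b1 b2 b1X b2X|u].
    by case: bX => _ [cX _]; exact: (connect_restrS sXY (cX _ _ b1X b2X)).
  rewrite !inE => /orP[uX|us']; first by exists u.
  have uj : u != j by apply: contraTneq us' => ->; case/andP: us.
  have [t /setD1P[_ tX] ut] := ear_to_X j u us' uj.
  by exists t => //; exact: (connect_restrS (subD1set _ _) ut).
- move=> v vY; apply: (uconnected_hub (B := X :\ v)) => [b1 b2 b1X b2X|u].
    exact: (connect_restrS (setSD _ sXY) (biconnected_uconnectedD1 (v := v) bX b1X b2X)).
  rewrite !inE => /andP[uv /orP[uX|us']]; last exact: ear_to_X.
  by exists u; rewrite ?inE ?uv.
Qed.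

End Ear.

Section Fork.
Variables (T : finType) (R : rel T) (k w : T).
Implicit Types (x z : T).

Definition fork z p1 p2 := [/\ path R z p1, last z p1 = k, path R z p2,
  last z p2 = w & uniq (z :: p1) && uniq (z :: p2)].

Lemma fork_meet z p1 p2 x : fork z p1 p2 -> x \in p1 -> x \in z :: p2 ->
  exists q1 q2, fork x q1 q2 /\ size q1 < size p1.
Proof.
case=> Rp1 Ep1 Rp2 Ep2 /andP[up1 up2] xp1.
have xz : x != z by apply: contraTneq xp1 => ->; case/andP: up1.
rewrite inE (negPf xz) /= => xp2.
case/splitPr: xp1 Rp1 Ep1 up1 => l1 r1; case/splitPr: xp2 Rp2 Ep2 up2 => l2 r2.
rewrite !cat_path !last_cat -!cat_cons !cat_uniq /=.
move=> /and3P[_ _ Rr2] Er2 /and4P[_ _ xNr2 ur2].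
move=> /and3P[_ _ Rr1] Er1 /and4P[_ _ xNr1 ur1].
exists r1, r2; split; last by rewrite size_cat /= addnS ltnS leq_addl.
by split; rewrite //= xNr1 xNr2 ur1 ur2.
Qed.

Lemma fork_disjoint z p1 p2 : fork z p1 p2 ->
  exists z' q1 q2, fork z' q1 q2 /\ uniq (z' :: q1 ++ q2).
Proof.
move: {2}(size p1).+1 (ltnSn (size p1)) => N.
elim: N z p1 p2 => // N IHN z p1 p2 szp1 f.
have [/hasP[x xp1 xp2] | noMeet] := boolP (has (mem (z :: p2)) p1).
  have [q1 [q2 [fx szq1]]] := fork_meet f xp1 xp2.
  exact: IHN x q1 q2 (leq_trans szq1 szp1) fx.
exists z, p1, p2; split => //; case: f => _ _ _ _ /andP[up1].
rewrite [uniq (z :: p2)]/= => /andP[zNp2 up2].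
rewrite -cat_cons cat_uniq up1 up2 andbT.
apply/hasPn=> y yp2; rewrite inE negb_or; apply/andP; split.
  by apply: contraNneq zNp2 => <-.
by apply: contra noMeet => yp1; apply/hasP; exists y; rewrite ?inE ?yp2 ?orbT.
Qed.

End Fork.

Section ForkEar.
Variables (T : finType) (a : rel T) (X : {set T}) (j k w z : T) (p1 p2 : seq T).
Hypotheses (kj : k != j) (akj : a k j) (jX : j \in X) (wX : w \in X).
Hypotheses (f : fork (restr a (~: [set j])) k w z p1 p2) (up : uniq (z :: p1 ++ p2)).

(* The ear j, k, ..., z, ..., w: the arc between j and k, then the fork read
   from k back to its root z and on to w. *)
Let s := rev (z :: p1) ++ p2.
Let Y := X :|: [set x in s].

Lemma mem_fork_ear x : x \in (z :: p1) ++ p2 -> x \in Y.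
Proof. by move=> xs; rewrite in_setU in_set mem_cat mem_rev -mem_cat xs orbT. Qed.

Lemma fork_ear_avoids : j \notin s.
Proof.
case: f => Rp1 Ep1 Rp2 _ _.
have kNj : last z p1 \in ~: [set j] by rewrite Ep1 !inE.
have /allP Ap1 := path_restr_all Rp1 kNj.
rewrite mem_cat mem_rev negb_or; apply/andP; split.
  by apply/negP=> /Ap1; rewrite !inE eqxx.
by apply/negP=> /(path_restr_sub Rp2); rewrite !inE eqxx.
Qed.

Lemma fork_ear_uniq : uniq (j :: s).
Proof.
rewrite /= fork_ear_avoids /s cat_uniq rev_uniq (eq_has (mem_rev (z :: p1))).
by move: up; rewrite -cat_cons cat_uniq.
Qed.

Lemma fork_ear_path : path (uadj a) j s.
Proof.
case: f => Rp1 Ep1 Rp2 _ /andP[up1 up2].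
rewrite /s cat_path rev_cons last_rcons -rev_cons (path_uadj Rp2 up2) andbT.
rewrite (lastI z p1) rev_rcons /= rev_path {1}/uadj /= Ep1 eq_sym kj akj orbT /=.
by apply: sub_path (path_uadj Rp1 up1) => x y; rewrite /= uadj_sym.
Qed.

Lemma biconnected_fork_ear : biconnected a X -> biconnected a Y.
Proof.
move=> bX; apply: biconnected_add_path bX jX fork_ear_path fork_ear_uniq _.
by case: f => _ _ _ Ep2 _; rewrite /s last_cat rev_cons last_rcons Ep2.
Qed.

Lemma fork_ear_k : k \in Y.
Proof. by case: f => _ Ep1 _ _ _; apply: mem_fork_ear; rewrite -Ep1 mem_cat mem_last. Qed.

Lemma sink_in_fork_ear i : sink_in a X i -> sink_in a Y i.
Proof.
case=> iX toi; have sXY : X \subset Y by apply: subsetUl.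
have toi_Y x : x \in X -> connect (restr a Y) x i.
  by move=> xX; exact: (connect_restrS sXY (toi x xX)).
split; first exact: (subsetP sXY).
case: f => Rp1 Ep1 Rp2 Ep2 _.
have inY p : {subset p <= (z :: p1) ++ p2} -> all (mem Y) p.
  by move=> sp; apply/allP=> x /sp /mem_fork_ear.
move=> x; rewrite in_setU in_set => /orP[/toi_Y // |].
rewrite mem_cat mem_rev => /orP[xp1 | xp2].
  have Ykj : restr a Y k j by rewrite /restr /= fork_ear_k akj (subsetP sXY).
  apply: connect_trans (connect_trans (connect1 Ykj) (toi_Y j jX)).
  rewrite -Ep1; apply: connect_restr_path (path_restr_base Rp1) _ xp1.
  by apply: inY => y yp1; rewrite mem_cat yp1.
apply: connect_trans (toi_Y w wX); rewrite -Ep2.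
have xzp2 : x \in z :: p2 by rewrite inE xp2 orbT.
apply: connect_restr_path (path_restr_base Rp2) _ xzp2.
by apply: inY => y; rewrite inE mem_cat => /predU1P[-> | ->]; rewrite ?mem_head ?orbT.
Qed.

End ForkEar.

Section Generation.
Variables (T : finType) (a : rel T).

Lemma sink_in_setU1 W i j k : sink_in a W i -> j \in W -> a k j -> sink_in a (k |: W) i.
Proof.
case=> iW toi jW akj; have sWkW : W \subset k |: W by apply: subsetUr.
split=> [|x]; first exact: (subsetP sWkW).
have Ykj : restr a (k |: W) k j by rewrite /restr /= setU11 (subsetP sWkW) ?akj.
rewrite in_setU1 => /predU1P[-> | xW]; last exact: (connect_restrS sWkW (toi x xW)).
exact: connect_trans (connect1 Ykj) (connect_restrS sWkW (toi j jW)).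
Qed.

Lemma not_dyn_part_fork j k Y : ~~ dyn_part a j k Y ->
  exists w z p1 p2, w \in Y /\ fork (restr a (~: [set j])) k w z p1 p2.
Proof.
rewrite /dyn_part /fE -setI_eq0 => /set0Pn[z]; rewrite !inE.
case/andP=> /andP[_ /existsP[k' /andP[/set1P-> zk]]] /andP[_ /existsP[w /andP[wY zw]]].
case/connectP: zk => q1 /shortenP[p1 Rp1 up1 _ Ep1].
case/connectP: zw => q2 /shortenP[p2 Rp2 up2 _ Ep2].
by exists w, z, p1, p2; split; last split; rewrite -?Ep1 -?Ep2 ?up1.
Qed.

Lemma has_block_gen_step W1 W : has_block a W1 -> gen_step a W1 W -> has_block a W.
Proof.
case=> X [sW1X [[_ bX] [i [iW1 [sW1 sX]]]]] [k [kNW1 [-> [j [jW1 [akj ndp]]]]]].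
have kj : k != j by apply: contraNneq kNW1 => ->.
have jX : j \in X := subsetP sW1X j jW1.
have sW1jX : W1 :\ j \subset X by apply: subset_trans (subD1set _ _) sW1X.
have [w [z0 [q1 [q2 [/(subsetP sW1jX) wX f0]]]]] := not_dyn_part_fork ndp.
have [z [p1 [p2 [f up]]]] := fork_disjoint f0.
exists (X :|: [set x in rev (z :: p1) ++ p2]); split.
  by rewrite subUset sub1set (fork_ear_k X f) (subset_trans sW1X) ?subsetUl.
have sY := sink_in_fork_ear akj jX wX f sX.
split; first by split; [exists i | exact: biconnected_fork_ear kj akj jX wX f up bX].
by exists i; split; [exact: setU1r | split; [exact: sink_in_setU1 sW1 jW1 akj |]].
Qed.

Lemma gen_from_pair_last_step n (W : {set T}) :
  3 <= n -> #|W| = n.+1 -> gen_from_pair a W ->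
  exists2 W1 : {set T}, #|W1| = n /\ gen_from_pair a W1 & gen_step a W1 W.
Proof.
move=> n3 cW [P [cpP [cPW chainW]]].
case: chainW cW cPW => [|W1 W' chainW1 stepW] cW cPW; first by rewrite ltnn andbF in cPW.
have cW1 : #|W1| = n.
  by case: stepW cW => k [kNW1 [-> _]]; rewrite cardsU1 kNW1 => -[].
exists W1 => //; split => //; exists P; split => //; split => //.
by case: cpP => i [j [ij [_ ->]]]; rewrite cards2 ij cW1.
Qed.

End Generation.

Theorem mainTheorem7 (T : finType) (a : rel T) (n : nat) :
  3 <= n ->
  (forall W : {set T}, #|W| = n -> gen_from_pair a W -> has_block a W) ->
  forall W : {set T}, #|W| = n.+1 -> gen_from_pair a W -> has_block a W.
Proof.
move=> n3 blockn W cW /(gen_from_pair_last_step n3 cW) [W1 [cW1 genW1] stepW].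
exact: has_block_gen_step (blockn W1 cW1 genW1) stepW.
Qed.
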